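(* Let $f:\mathbb{R}^n\to\mathbb{R}$ be continuously differentiable and bounded below with $\nabla f$ Lipschitz continuous with constant $L(f)$, let $s$ be an integer with $0<s<n$, and let $\{\mathbf{x}^k\}_{k\ge0}$ be a sequence generated by the IHT method with constant $L>L(f)$. Then any accumulation point of $\{\mathbf{x}^k\}_{k\ge0}$ is an $L$-stationary point of the problem (P): minimize $f(\mathbf{x})$ subject to $\|\mathbf{x}\|_0\le s$.
   Context: $C_s=\{\mathbf{x}\in\mathbb{R}^n:\|\mathbf{x}\|_0\le s\}$ where $\|\mathbf{x}\|_0$ is the number of nonzero components. $P_{C_s}(\mathbf{y})=\operatorname{argmin}_{\mathbf{x}\in C_s}\|\mathbf{x}-\mathbf{y}\|^2$ (possibly multi-valued). The IHT method with constant $L$: choose $\mathbf{x}^0\in C_s$ and for $k=0,1,2,\dots$ pick any $\mathbf{x}^{k+1}\in P_{C_s}\!\left(\mathbf{x}^k-\frac1L\nabla f(\mathbf{x}^k)\right)$. A point $\mathbf{x}^*\in C_s$ is $L$-stationary for (P) if $\mathbf{x}^*\in P_{C_s}\!\left(\mathbf{x}^*-\frac1L\nabla f(\mathbf{x}^* )\right)$. ''$\nabla f$ Lipschitz with constant $L(f)$'' means $\|\nabla f(\mathbf{x})-\nabla f(\mathbf{y})\|\le L(f)\|\mathbf{x}-\mathbf{y}\|$ for all $\mathbf{x},\mathbf{y}$. *)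

From mathcomp Require Import all_boot all_order all_algebra.
From mathcomp Require Import reals.
Set Implicit Arguments. Unset Strict Implicit. Unset Printing Implicit Defensive.
Import Order.TTheory GRing.Theory Num.Theory.
Local Open Scope ring_scope.

Section Defs.
Variables (R : realType) (n : nat).

Definition dotv (x y : 'rV[R]_n) : R := \sum_(i < n) x 0 i * y 0 i.
Definition sqnorm (x : 'rV[R]_n) : R := dotv x x.
Definition enorm (x : 'rV[R]_n) : R := Num.sqrt (sqnorm x).

Definition l0 (x : 'rV[R]_n) : nat := #|[set i : 'I_n | x 0 i != 0]|.

Definition inCs (s : nat) (x : 'rV[R]_n) : Prop := (l0 x <= s)%N.

Definition inPCs (s : nat) (y x : 'rV[R]_n) : Prop :=
  inCs s x /\ forall z, inCs s z -> sqnorm (x - y) <= sqnorm (z - y).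

Definition is_gradient (f : 'rV[R]_n -> R) (g : 'rV[R]_n -> 'rV[R]_n) : Prop :=
  forall x eps, 0 < eps -> exists2 delta, 0 < delta &
    forall y, enorm (y - x) < delta ->
      `|f y - f x - dotv (g x) (y - x)| <= eps * enorm (y - x).

Definition vcontinuous (g : 'rV[R]_n -> 'rV[R]_n) : Prop :=
  forall x eps, 0 < eps -> exists2 delta, 0 < delta &
    forall y, enorm (y - x) < delta -> enorm (g y - g x) < eps.

Definition lipschitz_with (Lf : R) (g : 'rV[R]_n -> 'rV[R]_n) : Prop :=
  forall x y, enorm (g x - g y) <= Lf * enorm (x - y).

Definition bounded_below (f : 'rV[R]_n -> R) : Prop :=
  exists m : R, forall x, m <= f x.

Definition IHT_seq (s : nat) (L : R) (g : 'rV[R]_n -> 'rV[R]_n)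
    (xs : nat -> 'rV[R]_n) : Prop :=
  inCs s (xs 0%N) /\
  forall k, inPCs s (xs k - L^-1 *: g (xs k)) (xs k.+1).

Definition vconverges (u : nat -> 'rV[R]_n) (l : 'rV[R]_n) : Prop :=
  forall eps, 0 < eps -> exists N, forall k, (N <= k)%N -> enorm (u k - l) < eps.

Definition accumulation_point (xs : nat -> 'rV[R]_n) (x : 'rV[R]_n) : Prop :=
  exists phi : nat -> nat, (forall j, (phi j < phi j.+1)%N) /\
    vconverges (fun j => xs (phi j)) x.

Definition L_stationary (s : nat) (L : R) (g : 'rV[R]_n -> 'rV[R]_n)
    (x : 'rV[R]_n) : Prop :=
  inCs s x /\ inPCs s (x - L^-1 *: g x) x.

End Defs.

From mathcomp Require Import all_boot all_order all_algebra.
From mathcomp Require Import reals.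
From mathcomp Require Import classical_sets topology normedtype derive.
From mathcomp Require Import ring lra.
Import Order.TTheory GRing.Theory Num.Theory.
Import numFieldNormedType.Exports.
Set Implicit Arguments. Unset Strict Implicit. Unset Printing Implicit Defensive.
Local Open Scope ring_scope.

(* The descent lemma f(x+d) <= f(x) + <g x, d> + Lf/2 |d|^2, combined with the
   projection inequality at the competitor x^k, gives the sufficient decrease
   f(x^{k+1}) <= f(x^k) - (L - Lf)/2 |x^{k+1} - x^k|^2.  As f is bounded below,
   consecutive iterates get arbitrarily close, so along a subsequence with
   x^{k_j} -> p also x^{k_j+1} -> p, while the gradient steps
   x^{k_j} - g(x^{k_j})/L converge to p - g(p)/L.  Since C_s is closed, the
   graph of the projection onto C_s is closed, whence p \in P_{C_s}(p - g(p)/L). *)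

Section Euclidean.
Variables (R : realType) (n : nat).
Implicit Types (x y z : 'rV[R]_n) (a : R).

Lemma dotvC x y : dotv x y = dotv y x.
Proof. by apply: eq_bigr => i _; rewrite mulrC. Qed.

Lemma dotvDl x y z : dotv (x + y) z = dotv x z + dotv y z.
Proof. by rewrite /dotv -big_split; apply: eq_bigr => i _; rewrite mxE mulrDl. Qed.

Lemma dotvZl a x y : dotv (a *: x) y = a * dotv x y.
Proof. by rewrite /dotv mulr_sumr; apply: eq_bigr => i _; rewrite mxE mulrA. Qed.

Lemma dotvNl x y : dotv (- x) y = - dotv x y.
Proof. by rewrite -scaleN1r dotvZl mulN1r. Qed.

Lemma dotvDr x y z : dotv z (x + y) = dotv z x + dotv z y.
Proof. by rewrite dotvC dotvDl !(dotvC z). Qed.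

Lemma dotvZr a x y : dotv y (a *: x) = a * dotv y x.
Proof. by rewrite dotvC dotvZl dotvC. Qed.

Lemma dotvNr x y : dotv y (- x) = - dotv y x.
Proof. by rewrite dotvC dotvNl dotvC. Qed.

Lemma dotv0l y : dotv 0 y = 0.
Proof. by rewrite -(scale0r (0 : 'rV[R]_n)) dotvZl mul0r. Qed.

Lemma sqnorm_ge0 x : 0 <= sqnorm x.
Proof. by apply: sumr_ge0 => i _; rewrite -expr2 sqr_ge0. Qed.

Lemma sqnorm_eq0 x : sqnorm x = 0 -> x = 0.
Proof.
move=> x0; apply/rowP => i; rewrite mxE.
have /eqP := @psumr_eq0P R _ predT _ (fun j _ => sqr_ge0 (x 0 j)) x0 i isT.
by rewrite mulf_eq0 orbb => /eqP.
Qed.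

Lemma sqnormD x y : sqnorm (x + y) = sqnorm x + 2 * dotv x y + sqnorm y.
Proof. rewrite /sqnorm !dotvDl !dotvDr (dotvC y x); ring. Qed.

Lemma sqnormN x : sqnorm (- x) = sqnorm x.
Proof. by rewrite /sqnorm dotvNl dotvNr opprK. Qed.

Lemma sqnormZ a x : sqnorm (a *: x) = a ^+ 2 * sqnorm x.
Proof. rewrite /sqnorm dotvZl dotvZr; ring. Qed.

Lemma enorm_ge0 x : 0 <= enorm x.
Proof. exact: sqrtr_ge0. Qed.

Lemma sqnormE x : sqnorm x = enorm x ^+ 2.
Proof. by rewrite sqr_sqrtr // sqnorm_ge0. Qed.

Lemma ler_enorm x y : (enorm x <= enorm y) = (sqnorm x <= sqnorm y).
Proof. exact/ler_sqrt/sqnorm_ge0. Qed.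

Lemma enormN x : enorm (- x) = enorm x.
Proof. by rewrite /enorm sqnormN. Qed.

Lemma enormZ a x : enorm (a *: x) = `|a| * enorm x.
Proof. by rewrite /enorm sqnormZ sqrtrM ?sqr_ge0 // sqrtr_sqr. Qed.

Lemma enorm_distC x y : enorm (x - y) = enorm (y - x).
Proof. by rewrite -opprB enormN. Qed.

(* Expand the square of the distance between the two normalised vectors. *)
Lemma dotv_le x y : dotv x y <= enorm x * enorm y.
Proof.
have [/sqnorm_eq0 ->|x0] := eqVneq (sqnorm x) 0.
  by rewrite dotv0l /enorm /sqnorm dotv0l sqrtr0 mul0r.
have [/sqnorm_eq0 ->|y0] := eqVneq (sqnorm y) 0.
  by rewrite dotvC dotv0l /enorm /sqnorm dotv0l sqrtr0 mulr0.
have ex : 0 < enorm x by rewrite sqrtr_gt0 lt_def x0 sqnorm_ge0.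
have ey : 0 < enorm y by rewrite sqrtr_gt0 lt_def y0 sqnorm_ge0.
have := sqnorm_ge0 ((enorm x)^-1 *: x - (enorm y)^-1 *: y).
rewrite sqnormD sqnormN !sqnormZ dotvZl dotvNr dotvZr !sqnormE.
set a := enorm x; set b := enorm y; set d := dotv x y.
have -> : a^-1 ^+ 2 * a ^+ 2 + 2 * (a^-1 * - (b^-1 * d)) + b^-1 ^+ 2 * b ^+ 2
    = 2 - 2 * d / (a * b).
  by field; rewrite !gt_eqF.
by rewrite subr_ge0 ler_pdivrMr ?mulr_gt0 //; lra.
Qed.

Lemma ler_enormD x y : enorm (x + y) <= enorm x + enorm y.
Proof.
rewrite -(ler_pXn2r (n := 2)) ?nnegrE ?addr_ge0 ?enorm_ge0 //.
rewrite -sqnormE sqnormD !sqnormE.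
have := dotv_le x y; lra.
Qed.

Lemma enorm_distD z x y : enorm (x - y) <= enorm (x - z) + enorm (z - y).
Proof. by have := ler_enormD (x - z) (z - y); rewrite addrA subrK. Qed.

Lemma ler_coord_enorm x (i : 'I_n) : `|x 0 i| <= enorm x.
Proof.
rewrite -(ler_pXn2r (n := 2)) ?nnegrE ?enorm_ge0 // real_normK ?num_real //.
rewrite -sqnormE /sqnorm /dotv (bigD1 i) //= -expr2 lerDl.
by apply: sumr_ge0 => j _; rewrite -expr2 sqr_ge0.
Qed.

Lemma lipschitz_const_ge0 (Lf : R) (g : 'rV[R]_n -> 'rV[R]_n) :
  (0 < n)%N -> lipschitz_with Lf g -> 0 <= Lf.
Proof.
move=> n0 gL; pose v : 'rV[R]_n := const_mx 1.
have ev : 0 < enorm v.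
  rewrite sqrtr_gt0 /sqnorm /dotv.
  under eq_bigr do rewrite mxE mulr1.
  by rewrite sumr_const card_ord ltr0n.
have := gL v 0; rewrite subr0.
have := enorm_ge0 (g v - g 0); nra.
Qed.

End Euclidean.

Section Limits.
Variables (R : realType) (n : nat).
Implicit Types (u v : nat -> 'rV[R]_n) (l : 'rV[R]_n).

Lemma vconverges_lipschitz (K : R) (h : 'rV[R]_n -> 'rV[R]_n) u l :
  lipschitz_with K h -> vconverges u l -> vconverges (h \o u) (h l).
Proof.
move=> hK ul e e0.
have K1 : 0 < `|K| + 1 by rewrite ltr_pwDr ?normr_ge0.
have [N uN] := ul (e / (`|K| + 1)) (divr_gt0 e0 K1).
exists N => k /uN; rewrite ltr_pdivlMr // => uk /=.
apply: le_lt_trans (hK _ _) _.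
have := ler_norm K; have := enorm_ge0 (u k - l); nra.
Qed.

Lemma vconverges_subseq u l (phi : nat -> nat) :
  (forall j, (phi j < phi j.+1)%N) -> vconverges u l ->
  vconverges (u \o phi) l.
Proof.
move=> phi_incr ul e /ul [N uN]; exists N => k Nk /=; apply: uN.
apply: leq_trans Nk _; elim: k => // k IH.
exact: leq_ltn_trans IH (phi_incr k).
Qed.

Lemma vconverges_near u v l :
  vconverges u l -> vconverges (fun k => v k - u k) 0 -> vconverges v l.
Proof.
move=> ul vu e e0.
have [N1 uN1] := ul (e / 2) (divr_gt0 e0 (ltr0Sn _ 1)).
have [N2 vN2] := vu (e / 2) (divr_gt0 e0 (ltr0Sn _ 1)).
exists (maxn N1 N2) => k; rewrite geq_max => /andP [/uN1 uk /vN2].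
rewrite subr0 => vk; apply: le_lt_trans (enorm_distD (u k) _ _) _; lra.
Qed.

(* Eventually every coordinate of [u k] is within [|l_i|] of [l_i], so the
   support of [l] is contained in that of [u k]. *)
Lemma inCs_limit (s : nat) u l :
  (forall k, inCs s (u k)) -> vconverges u l -> inCs s l.
Proof.
move=> uC ul.
pose r (i : 'I_n) := if l 0 i == 0 then 1 else `|l 0 i|.
have r0 i : 0 < r i by rewrite /r; case: eqP => [//|/eqP]; rewrite normr_gt0.
have [N uN] : exists N : 'I_n -> nat,
    forall i k, (N i <= k)%N -> enorm (u k - l) < r i.
  apply: (@fin_all_exists _ (fun=> nat)
    (fun i N => forall k, (N <= k)%N -> enorm (u k - l) < r i)) => i.
  exact: ul.
pose K := \max_(i < n) N i.
have supp : [set i | l 0 i != 0] \subset [set i | u K 0 i != 0].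
  apply/fintype.subsetP => i; rewrite !inE => li0; apply/negP => /eqP ui0.
  have := uN i K (leq_bigmax i); rewrite /r (negbTE li0).
  by have := ler_coord_enorm (u K - l) i; rewrite !mxE ui0 sub0r normrN; lra.
exact: leq_trans (subset_leq_card supp) (uC K).
Qed.

(* [u k] is at least as close to [v k] as the competitor [z]; pass to the
   limit with the triangle inequality. *)
Lemma inPCs_limit (s : nat) u v l m :
  (forall k, inPCs s (v k) (u k)) -> vconverges u l -> vconverges v m ->
  inPCs s m l.
Proof.
move=> uP ul vm; split; first by apply: inCs_limit ul => k; case: (uP k).
move=> z zC; rewrite -ler_enorm; apply/ler_addgt0Pr => e e0.
have e3 : 0 < e / 3 by rewrite divr_gt0.
have [N1 uN1] := ul _ e3; have [N2 vN2] := vm _ e3.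
pose k := maxn N1 N2.
have uk := uN1 k (leq_maxl _ _); have vk := vN2 k (leq_maxr _ _).
have proj : enorm (u k - v k) <= enorm (z - v k).
  by rewrite ler_enorm; case: (uP k) => _; apply.
have := enorm_distD (u k) l m; have := enorm_distD (v k) (u k) m.
have := enorm_distD m z (v k).
rewrite (enorm_distC l (u k)) (enorm_distC m (v k)); lra.
Qed.

End Limits.

Section Descent.
Variables (R : realType) (n : nat).
Variables (f : 'rV[R]_n -> R) (g : 'rV[R]_n -> 'rV[R]_n).
Hypothesis f_grad : is_gradient f g.

Lemma is_derive_along (x d : 'rV[R]_n) (t : R) :
  is_derive t 1 (fun u => f (x + u *: d)) (dotv (g (x + t *: d)) d).
Proof.
set D := dotv _ _.
suff DD : ((fun h : R => h^-1 *: (f (x + (h%:A + t) *: d) - f (x + t *: d)))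
    @ 0^' --> D)%classic.
  by apply: DeriveDef; [apply/cvg_ex; exists D | apply: cvg_lim].
apply/cvgrPdist_le => e e0.
have d1 : 0 < enorm d + 1 by have := enorm_ge0 d; lra.
have [del del0 fdel] := f_grad (x + t *: d) (divr_gt0 e0 d1).
near=> h.
have h0 : h != 0 by near: h; exact: nbhs_dnbhs_neq.
have hdel : `|h| < del / (enorm d + 1).
  by near: h; apply: dnbhs0_lt; exact: divr_gt0.
have step : x + (h%:A + t) *: d - (x + t *: d) = h *: d.
  by rewrite [h%:A]mulr1; apply/rowP => i; rewrite !mxE; ring.
have := fdel (x + (h%:A + t) *: d); rewrite step enormZ dotvZr.
have ed := enorm_ge0 d; have hn := normr_ge0 h.
rewrite ltr_pdivlMr // in hdel.
move=> /(_ ltac:(nra)) fh.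
have -> : D - h^-1 *: (f (x + (h%:A + t) *: d) - f (x + t *: d))
    = - (h^-1 * (f (x + (h%:A + t) *: d) - f (x + t *: d) - h * D)).
  by rewrite /GRing.scale /=; field.
rewrite normrN normrM normfV ler_pdivrMl ?normr_gt0 //.
apply: le_trans fh _.
have q0 : 0 < e / (enorm d + 1) by rewrite divr_gt0.
have qd : e / (enorm d + 1) * (enorm d + 1) = e by rewrite divfK ?gt_eqF.
nra.
Unshelve. all: by end_near.
Qed.

(* Mean value theorem applied to [t |-> f (x + t d) - t <g x, d> - t^2 Lf/2 |d|^2],
   whose derivative is nonpositive on [0, 1] by Cauchy-Schwarz and Lipschitz. *)
Lemma descent_lemma (Lf : R) (x d : 'rV[R]_n) :
  lipschitz_with Lf g ->
  f (x + d) <= f x + dotv (g x) d + Lf / 2 * sqnorm d.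
Proof.
move=> gL.
set a := dotv (g x) d; set b := Lf / 2 * sqnorm d.
pose phi (u : R) := f (x + u *: d).
pose q (u : R) := a * u + b * (u * u).
pose psi := phi \- q.
have psi' (t : R) : is_derive t 1 psi (dotv (g (x + t *: d)) d - (a + b * (2 * t))).
  apply: is_deriveB; first exact: is_derive_along.
  by apply: is_derive_eq; rewrite /GRing.scale /= !mulr1; ring.
have psi_cont : {within `[0, 1], continuous psi}%classic.
  by apply: derivable_within_continuous => t _; case: (psi' t).
have [c /andP [c0 _] mvt] := MVT_segment ler01 (fun t _ => psi' t) psi_cont.
have slope : dotv (g (x + c *: d)) d - a <= b * (2 * c).
  rewrite -dotvNl -dotvDl; apply: le_trans (dotv_le _ _) _.
  have := gL (x + c *: d) x; rewrite [x + _ - x]addrAC subrr add0r enormZ.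
  rewrite ger0_norm //.
  have := enorm_ge0 (g (x + c *: d) - g x); have := enorm_ge0 d.
  rewrite /b sqnormE; nra.
move: mvt; rewrite /psi /phi /q /= scale1r scale0r addr0 !mulr1 !mulr0 subr0.
lra.
Qed.

End Descent.

Lemma vanishing_decrement (R : realType) (a b : nat -> R) (c m : R) :
  0 < c -> (forall k, m <= a k) -> (forall k, 0 <= b k) ->
  (forall k, a k.+1 <= a k - c * b k) ->
  forall eta, 0 < eta -> exists N, forall k, (N <= k)%N -> b k < eta.
Proof.
move=> c0 am b0 a_dec eta eta0.
have a_lb : has_lbound (range a) by exists m => _ [k _ <-].
have a_inf : has_inf (range a) by split=> //; exists (a 0%N), 0%N.
have [_ [N _ <-] aN] := inf_adherent (mulr_gt0 c0 eta0) a_inf.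
exists N => k Nk.
have a_noninc : a k <= a N.
  have a_step i : a i.+1 <= a i by have := a_dec i; have := b0 i; nra.
  exact: (Order.NatMonotonyTheory.nonincnP a_step).
have := ge_inf a_lb (ex_intro2 _ _ k.+1 I erefl).
have := a_dec k; rewrite -(ltr_pM2l c0); lra.
Qed.

Section IHT.
Variables (R : realType) (n s : nat).
Variables (f : 'rV[R]_n -> R) (g : 'rV[R]_n -> 'rV[R]_n) (Lf L : R).
Hypotheses (f_grad : is_gradient f g) (g_lip : lipschitz_with Lf g) (L0 : 0 < L).

Lemma lipschitz_gradient_step :
  lipschitz_with (1 + Lf / L) (fun x => x - L^-1 *: g x).
Proof.
move=> x y.
have -> : x - L^-1 *: g x - (y - L^-1 *: g y) = (x - y) - L^-1 *: (g x - g y).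
  by apply/rowP => i; rewrite !mxE; ring.
apply: le_trans (ler_enormD _ _) _.
rewrite enormN enormZ gtr0_norm ?invr_gt0 // mulrDl mul1r lerD2l.
rewrite mulrAC mulrC; apply: ler_wpM2r; [by rewrite invr_ge0 ltW | exact: g_lip].
Qed.

Lemma projected_step_le (v x x' : 'rV[R]_n) :
  inCs s x -> inPCs s (x - L^-1 *: v) x' ->
  dotv v (x' - x) <= - (L / 2) * sqnorm (x' - x).
Proof.
move=> xC [_ x'P]; have := x'P x xC.
set w := L^-1 *: v.
have -> : x' - (x - w) = (x' - x) + w by rewrite opprB addrCA addrC.
rewrite opprB subrKC sqnormD dotvZr dotvC.
set S := sqnorm (x' - x); set D := dotv v (x' - x) => le_w.
have : L * (S + 2 * (L^-1 * D)) <= 0 by apply: mulr_ge0_le0; [exact: ltW | lra].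
rewrite mulrDr [L * (2 * _)]mulrCA mulVKf ?gt_eqF //; lra.
Qed.

Lemma iht_sufficient_decrease (x x' : 'rV[R]_n) :
  inCs s x -> inPCs s (x - L^-1 *: g x) x' ->
  f x' <= f x - (L - Lf) / 2 * sqnorm (x' - x).
Proof.
move=> xC x'P.
have := descent_lemma f_grad x (x' - x) g_lip; rewrite subrKC.
have := projected_step_le xC x'P; lra.
Qed.

Lemma IHT_seq_inCs (xs : nat -> 'rV[R]_n) :
  IHT_seq s L g xs -> forall k, inCs s (xs k).
Proof. by case=> x0C xsP [|k] //; case: (xsP k). Qed.

Lemma iht_steps_vanish (xs : nat -> 'rV[R]_n) :
  bounded_below f -> Lf < L -> IHT_seq s L g xs ->
  vconverges (fun k => xs k.+1 - xs k) 0.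
Proof.
move=> [m fm] LfL xsP e e0.
have c0 : 0 < (L - Lf) / 2 by rewrite divr_gt0 // subr_gt0.
have [N smallN] := vanishing_decrement c0 (fun k => fm (xs k))
  (fun k => sqnorm_ge0 (xs k.+1 - xs k))
  (fun k => iht_sufficient_decrease (IHT_seq_inCs xsP k) (xsP.2 k))
  (mulr_gt0 e0 e0).
exists N => k /smallN; rewrite subr0 sqnormE -expr2.
by rewrite ltr_pXn2r ?nnegrE ?enorm_ge0 ?ltW.
Qed.

End IHT.

Theorem theorem3p1 (R : realType) (n s : nat)
  (f : 'rV[R]_n -> R) (g : 'rV[R]_n -> 'rV[R]_n) (Lf L : R)
  (xs : nat -> 'rV[R]_n) :
  is_gradient f g -> vcontinuous g -> bounded_below f ->
  lipschitz_with Lf g ->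
  (0 < s)%N -> (s < n)%N ->
  Lf < L ->
  IHT_seq s L g xs ->
  forall xstar, accumulation_point xs xstar -> L_stationary s L g xstar.
Proof.
(* Continuity of [g] is implied by its Lipschitz bound. *)
move=> f_grad _ f_lb g_lip s0 sn LfL xsP xstar [phi [phi_incr xs_phi]].
have L0 : 0 < L := le_lt_trans (lipschitz_const_ge0 (ltn_trans s0 sn) g_lip) LfL.
have xs_phi1 : vconverges (fun j => xs (phi j).+1) xstar.
  apply: vconverges_near xs_phi _.
  exact: vconverges_subseq phi_incr (iht_steps_vanish f_grad g_lip L0 f_lb LfL xsP).
have ys_phi := vconverges_lipschitz (lipschitz_gradient_step g_lip L0) xs_phi.
have xstarP := inPCs_limit (fun j => xsP.2 (phi j)) xs_phi1 ys_phi.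
by split=> //; case: xstarP.
Qed.
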